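(* Let $K,L$ be (not necessarily associative) rings with identity, let $q\colon K\to L$ be a multiplicative quadratic map with $f(a,b)=q(a+b)-q(a)-q(b)$, and let $a\in K$ satisfy $f(a,b)=0$ for all $b\in K$. Then: (1) $q(a)f(b,c)=f(b,c)q(a)=0$ for all $b,c\in K$; (2) if $q(a)$ is not a zero-divisor (in particular $q(a)\neq 0$), then $\operatorname{char}L=2$ and $q$ is a ring homomorphism.
   Context: A map $q\colon K\to L$ between rings with identity is called a multiplicative quadratic map if (i) $q(ab)=q(a)q(b)$ for all $a,b\in K$; (ii) $q(n\cdot 1_K)=n^2\cdot 1_L$ for all $n\in\mathbb{Z}$; (iii) the map $f\colon K\times K\to L$, $f(a,b)=q(a+b)-q(a)-q(b)$, is biadditive. *)

From HB Require Import structures.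
From mathcomp Require Import all_boot all_order all_algebra.
Set Implicit Arguments. Unset Strict Implicit. Unset Printing Implicit Defensive.
Import GRing.Theory.
Local Open Scope ring_scope.

Record naRing := NaRing {
  nar_car :> zmodType;
  nar_mul : nar_car -> nar_car -> nar_car;
  nar_one : nar_car;
  nar_mulDl : forall x y z, nar_mul (x + y) z = nar_mul x z + nar_mul y z;
  nar_mulDr : forall x y z, nar_mul x (y + z) = nar_mul x y + nar_mul x z;
  nar_mul1r : forall x, nar_mul nar_one x = x;
  nar_mulr1 : forall x, nar_mul x nar_one = x
}.

Definition polar (K L : naRing) (q : K -> L) (a b : K) : L :=
  q (a + b) - q a - q b.

Definition mult_quadratic (K L : naRing) (q : K -> L) : Prop :=
  [/\ (forall a b : K, q (nar_mul a b) = nar_mul (q a) (q b)),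
      (forall n : int, q ((nar_one K) *~ n) = (nar_one L) *~ (n * n)),
      (forall a b c : K, polar q (a + b) c = polar q a c + polar q b c) &
      (forall a b c : K, polar q a (b + c) = polar q a b + polar q a c)].

(* x is not a zero-divisor: x <> 0 and x is left and right cancellable
   against 0 (so 0 counts as a zero-divisor, as in the paper's
   "in particular q(a) <> 0"). *)
Definition non_zero_divisor (L : naRing) (x : L) : Prop :=
  [/\ x <> 0,
      (forall y : L, nar_mul x y = 0 -> y = 0) &
      (forall y : L, nar_mul y x = 0 -> y = 0)].

(* char L = 2 : 2 is the least positive n with n * 1_L = 0. *)
Definition char_two (L : naRing) : Prop :=
  nar_one L <> 0 /\ nar_one L + nar_one L = 0.

Definition ring_hom (K L : naRing) (q : K -> L) : Prop :=
  [/\ (forall a b : K, q (a + b) = q a + q b),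
      (forall a b : K, q (nar_mul a b) = nar_mul (q a) (q b)) &
      q (nar_one K) = nar_one L].

From HB Require Import structures.
From mathcomp Require Import all_boot all_order all_algebra.
Import GRing.Theory.
Local Open Scope ring_scope.

(* Write xy for nar_mul x y and f for the polar form of q.
   Expanding q(x(b+c)) = q(x)q(b+c) and q((b+c)x) = q(b+c)q(x) with the
   quadratic expansion q(u+v) = q(u) + q(v) + f(u,v) gives the "transfer"
   identities q(x)f(b,c) = f(xb,xc) and f(b,c)q(x) = f(bx,cx).
   If a lies in the radical of f (f(a,-) = 0), then q(a+y) = q(a) + q(y);
   applying the transfer identity with x = a+y and c = 1 and using
   biadditivity shows that ab and ba also lie in the radical.  Hence
   q(a)f(b,c) = f(ab,ac) = 0 and f(b,c)q(a) = f(ba,ca) = 0, which is (1).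
   For (2), cancelling q(a) in (1) makes f vanish identically, so q is
   additive; then q(1) = 1, and q(1+1) = 4.1 together with additivity of q
   gives 1+1 = 0, while 1 <> 0 because q(a).1 = q(a) <> 0.
   The file first records two facts on non-associative rings and on polar
   forms, then develops the transfer identities and the radical lemmas in a
   section, and finally assembles the theorem. *)

Lemma nar_mulr0 {L : naRing} (x : L) : nar_mul x 0 = 0.
Proof.
have h := nar_mulDr x 0 0; rewrite addr0 in h.
by apply: (@addrI _ (nar_mul x 0)); rewrite -h addr0.
Qed.

Lemma polarC {K L : naRing} (q : K -> L) x y : polar q x y = polar q y x.
Proof. by rewrite /polar (addrC x y) -!addrA (addrC (- q x)). Qed.

Lemma polar_expand {K L : naRing} (q : K -> L) x y :
  q (x + y) = q x + q y + polar q x y.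
Proof. by rewrite /polar -(addrA (q (x + y))) -opprD [RHS]addrC subrK. Qed.

Definition polar_radical {K L : naRing} (q : K -> L) (x : K) : Prop :=
  forall y : K, polar q x y = 0.

Lemma radical_additive {K L : naRing} (q : K -> L) x y :
  polar_radical q x -> q (x + y) = q x + q y.
Proof. by move=> hx; rewrite polar_expand hx addr0. Qed.

Section MultiplicativeBiadditive.

Variables (K L : naRing) (q : K -> L).
Hypothesis qM : forall x y : K, q (nar_mul x y) = nar_mul (q x) (q y).
Hypothesis polarDl :
  forall x y z : K, polar q (x + y) z = polar q x z + polar q y z.
Hypothesis polarDr :
  forall x y z : K, polar q x (y + z) = polar q x y + polar q x z.

Lemma mul_polar_l x b c :
  nar_mul (q x) (polar q b c) = polar q (nar_mul x b) (nar_mul x c).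
Proof.
have := qM x (b + c).
rewrite nar_mulDr polar_expand polar_expand !nar_mulDr -!qM.
by move/addrI.
Qed.

Lemma mul_polar_r x b c :
  nar_mul (polar q b c) (q x) = polar q (nar_mul b x) (nar_mul c x).
Proof.
have := qM (b + c) x.
rewrite nar_mulDl polar_expand polar_expand !nar_mulDl -!qM.
by move/addrI.
Qed.

Variable a : K.
Hypothesis a_rad : polar_radical q a.

(* The radical absorbs left multiples: ab is in the radical.  Compare both
   sides of q(a+y) f(b,1) = f((a+y)b, a+y). *)
Lemma radical_mulr b : polar_radical q (nar_mul a b).
Proof.
move=> y.
have := mul_polar_l (a + y) b (nar_one K).
rewrite radical_additive // nar_mulDl !nar_mulDl !nar_mulr1 !polarDl !polarDr.
rewrite !mul_polar_l !nar_mulr1 (polarC q (nar_mul y b) a) a_rad add0r.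
move/addIr=> h.
by apply: (@addrI _ (polar q (nar_mul a b) a)); rewrite addr0 -h.
Qed.

Lemma radical_mull b : polar_radical q (nar_mul b a).
Proof.
move=> y.
have := mul_polar_r (a + y) b (nar_one K).
rewrite radical_additive // nar_mulDr !nar_mulDr !nar_mul1r !polarDl !polarDr.
rewrite !mul_polar_r !nar_mul1r (polarC q (nar_mul b y) a) a_rad add0r.
move/addIr=> h.
by apply: (@addrI _ (polar q (nar_mul b a) a)); rewrite addr0 -h.
Qed.

Lemma radical_annihilates_polar b c :
  nar_mul (q a) (polar q b c) = 0 /\ nar_mul (polar q b c) (q a) = 0.
Proof. by rewrite mul_polar_l mul_polar_r radical_mulr radical_mull. Qed.

End MultiplicativeBiadditive.

(* An additive map with q(n.1) = n^2.1 is unital and forces 1 + 1 = 0: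
   q(2.1) = 4.1 must equal q(1) + q(1) = 2.1. *)
Lemma additive_square_unit {K L : naRing} (q : K -> L) :
  (forall b c : K, q (b + c) = q b + q c) ->
  (forall n : int, q (nar_one K *~ n) = nar_one L *~ (n * n)) ->
  q (nar_one K) = nar_one L /\ nar_one L + nar_one L = 0.
Proof.
move=> qD qn.
have q1 : q (nar_one K) = nar_one L by have := qn 1; rewrite !mulr1z.
split=> //.
have := qn 2.
rewrite (_ : 2 * 2 = 2%:Z + 2%:Z) // !mulrzDr !mulr1z qD q1.
by rewrite -[LHS]addr0 => /addrI.
Qed.

Theorem lemma2p2 (K L : naRing) (q : K -> L) (a : K)
  (hq : mult_quadratic q)
  (ha : forall b : K, polar q a b = 0) :
  (forall b c : K,
     nar_mul (q a) (polar q b c) = 0 /\ nar_mul (polar q b c) (q a) = 0) /\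
  (non_zero_divisor (q a) -> char_two L /\ ring_hom q).
Proof.
case: hq => qM qn polarDl polarDr.
have annihil := @radical_annihilates_polar K L q qM polarDl polarDr a ha.
split=> // -[qa_nz qa_regl _].
have polar0 b c : polar q b c = 0 by apply: qa_regl; case: (annihil b c).
have qD b c : q (b + c) = q b + q c by apply: radical_additive.
have [q1 two0] := additive_square_unit q qD qn.
split; last by split.
split=> // one0; apply: qa_nz.
by rewrite -(nar_mulr1 (q a)) one0 nar_mulr0.
Qed.
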